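(* Suppose $\mathrm{char}(k)\ne 2$ ($k$ algebraically closed). Let $(V,q)$ be a non-degenerate quadratic space and let $(W,q')$ be a quadratic space of dimension at most $\aleph_0$. Then there is an embedding $W\to V$, i.e. a $k$-linear map $\phi:W\to V$ with $q\circ\phi=q'$.
   Context: A quadratic space is a $k$-vector space $V$ together with $q\in P_2(V)$, a degree-$2$ polynomial function on $V$ (in dual coordinates $x_i$ to a basis, a formal, possibly infinite, $k$-linear combination of degree-$2$ monomials). The strength of $q$ is the least $s$ with $q=\sum_{i=1}^s g_ih_i$ for linear forms $g_i,h_i\in P_1(V)$ ($\infty$ if none exists); $(V,q)$ is non-degenerate if $q$ has infinite strength. *)

From mathcomp Require Import all_boot all_algebra.
Set Implicit Arguments. Unset Strict Implicit. Unset Printing Implicit Defensive.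
Import GRing.Theory.
Local Open Scope ring_scope.

Definition qs_linear_form (k : fieldType) (V : lmodType k) (f : V -> k) : Prop :=
  forall (a : k) (u v : V), f (a *: u + v) = a * f u + f v.

Definition qs_bilinear_form (k : fieldType) (V : lmodType k) (B : V -> V -> k) : Prop :=
  (forall v, qs_linear_form (fun u => B u v)) /\ (forall u, qs_linear_form (B u)).

(* q is a degree-2 polynomial function on V, i.e. q in P_2(V): in dual
   coordinates x_i to a basis (e_i), q = sum_{i,j} c_ij x_i x_j (a formal,
   possibly infinite, combination).  Equivalently q(v) = B(v,v) for the
   bilinear form B(u,v) = sum c_ij x_i(u) x_j(v) (and conversely
   c_ij = B(e_i, e_j)). *)
Definition qs_quadratic (k : fieldType) (V : lmodType k) (q : V -> k) : Prop :=
  exists B : V -> V -> k, qs_bilinear_form B /\ forall v, q v = B v v.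

Definition qs_strength_le (k : fieldType) (V : lmodType k) (q : V -> k) (s : nat) : Prop :=
  exists g h : 'I_s -> V -> k,
    (forall i, qs_linear_form (g i)) /\ (forall i, qs_linear_form (h i)) /\
    forall v, q v = \sum_(i < s) g i v * h i v.

Definition qs_nondegenerate (k : fieldType) (V : lmodType k) (q : V -> k) : Prop :=
  forall s : nat, ~ qs_strength_le q s.

Definition qs_countable_dim (k : fieldType) (W : lmodType k) : Prop :=
  exists e : nat -> W, forall w : W, exists (n : nat) (c : 'I_n -> k),
    w = \sum_(i < n) c i *: e i.

(* Since char k <> 2, q(u) = B(u,u) can be recovered from the polar form
   polar(u,w) = B(u,w) + B(w,u).  A non-degenerate q carries an infinite
   orthonormal sequence v_0, v_1, ...: if every vector orthogonal to
   v_0, ..., v_(m-1) were isotropic, q would be a sum of m squares of linear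
   forms.  Pairing v_2i with v_2i+1 by a square root of -1 yields hyperbolic
   pairs (f_i, g_i), for which q (sum_i x_i f_i + y_i g_i) = sum_i x_i y_i.
   On the other side, the members of the countable spanning family of W that
   are not in the span of their predecessors form a basis with coordinate
   forms c_j, and splitting the matrix of q' into its upper triangle writes
   q'(w) = sum_j c_j(w) y_j(w) with linear forms y_j vanishing beyond the
   support of w.  Then w |-> sum_j c_j(w) f_j + y_j(w) g_j is the embedding. *)

From HB Require Import structures.
From mathcomp Require Import all_boot all_algebra.
From mathcomp Require Import ring zify.
From Stdlib Require Import ClassicalEpsilon.
Set Implicit Arguments. Unset Strict Implicit. Unset Printing Implicit Defensive.
Import GRing.Theory.
Local Open Scope ring_scope.

Definition linear_of (k : fieldType) (W V : lmodType k) (f : W -> V)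
    (fL : forall a u v, f (a *: u + v) = a *: f u + f v) : {linear W -> V} :=
  HB.pack f (GRing.isLinear.Build k W V *:%R f fL).

Lemma seq_choice (A : Type) (a0 : A) (P : nat -> (nat -> A) -> A -> Prop) :
  (forall n s, exists x, P n s x) ->
  (forall n s s' x, (forall i, (i < n)%N -> s i = s' i) -> P n s x -> P n s' x) ->
  exists s : nat -> A, forall n, P n s (s n).
Proof.
move=> ex_next P_ext.
pose next n s := epsilon (inhabits a0) (P n s).
pose pre := fix pre n : nat -> A :=
  if n is m.+1 then fun i => if (i < m)%N then pre m i else next m (pre m)
  else fun _ => a0.
have preS n : pre n.+1 n = next n (pre n) by rewrite /= ltnn.
have pre_stable n i : (i < n)%N -> pre n i = pre i.+1 i.
  elim: n => // n IH; rewrite ltnS leq_eqVlt => /orP[/eqP-> | lt_in] /=.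
    by rewrite ltnn.
  by rewrite lt_in IH.
exists (fun i => pre i.+1 i) => n; rewrite preS.
apply: P_ext (epsilon_spec _ _ (ex_next n (pre n))) => i; exact: pre_stable.
Qed.

Lemma sum_ord_widen (X : nmodType) (F : nat -> X) N M :
  (N <= M)%N -> (forall j, (N <= j)%N -> F j = 0) ->
  \sum_(j < M) F j = \sum_(j < N) F j.
Proof.
move=> le_NM F0; rewrite (big_ord_widen M F le_NM) [RHS]big_mkcond.
by apply: eq_bigr => j _; case: ltnP => // /F0.
Qed.

Section LinearForms.
Variables (k : fieldType) (V : lmodType k) (f : V -> k).
Hypothesis fL : qs_linear_form f.

Lemma linfD u w : f (u + w) = f u + f w.
Proof. by rewrite -[u]scale1r fL mul1r scale1r. Qed.

Lemma linf0 : f 0 = 0.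
Proof. by apply: (addrI (f 0)); rewrite -linfD !addr0. Qed.

Lemma linfZ a u : f (a *: u) = a * f u.
Proof. by rewrite -[a *: u]addr0 fL linf0 addr0. Qed.

Lemma linfB u w : f (u - w) = f u - f w.
Proof. by rewrite -scaleN1r linfD linfZ mulN1r. Qed.

Lemma linf_sum (I : Type) (r : seq I) (P : pred I) (c : I -> k) (y : I -> V) :
  f (\sum_(i <- r | P i) c i *: y i) = \sum_(i <- r | P i) c i * f (y i).
Proof. by elim/big_rec2: _ => [|i a b _ <-]; rewrite ?linf0 ?fL. Qed.

End LinearForms.

Section PolarForm.
Variables (k : fieldType) (V : lmodType k) (B : V -> V -> k).
Hypothesis BL : qs_bilinear_form B.

Definition polar u w := B u w + B w u.

Lemma polarC u w : polar u w = polar w u.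
Proof. by rewrite /polar addrC. Qed.

Lemma polar_linl w : qs_linear_form (polar^~ w).
Proof. by case: BL => BL1 BL2 a u u'; rewrite /polar BL1 BL2; ring. Qed.

Lemma polar_linr u : qs_linear_form (polar u).
Proof. by move=> a w w'; rewrite !(polarC u) polar_linl. Qed.

Lemma polarDl u u' w : polar (u + u') w = polar u w + polar u' w.
Proof. exact: linfD (polar_linl w) u u'. Qed.
Lemma polarDr u w w' : polar u (w + w') = polar u w + polar u w'.
Proof. exact: linfD (polar_linr u) w w'. Qed.
Lemma polarBl u u' w : polar (u - u') w = polar u w - polar u' w.
Proof. exact: linfB (polar_linl w) u u'. Qed.
Lemma polarZl a u w : polar (a *: u) w = a * polar u w.
Proof. exact: linfZ (polar_linl w) a u. Qed.
Lemma polarZr a u w : polar u (a *: w) = a * polar u w.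
Proof. exact: linfZ (polar_linr u) a w. Qed.
Lemma polar_suml (I : Type) (r : seq I) (P : pred I) (c : I -> k) (y : I -> V) w :
  polar (\sum_(i <- r | P i) c i *: y i) w = \sum_(i <- r | P i) c i * polar (y i) w.
Proof. by have := linf_sum (polar_linl w) r P c y. Qed.
Lemma polar_sumr (I : Type) (r : seq I) (P : pred I) (c : I -> k) (y : I -> V) u :
  polar u (\sum_(i <- r | P i) c i *: y i) = \sum_(i <- r | P i) c i * polar u (y i).
Proof. by have := linf_sum (polar_linr u) r P c y. Qed.

Lemma polar_diag u : polar u u = B u u * 2.
Proof. by rewrite /polar; ring. Qed.

Lemma form_addE u w : B (u + w) (u + w) = B u u + B w w + polar u w.
Proof.
by case: BL => BL1 BL2; rewrite /polar (linfD (BL1 _)) !(linfD (BL2 _)); ring.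
Qed.

Lemma form_scaleE a u : B (a *: u) (a *: u) = a ^+ 2 * B u u.
Proof. by case: BL => BL1 BL2; rewrite (linfZ (BL1 _)) (linfZ (BL2 _)); ring. Qed.

End PolarForm.

Lemma sum_ord_delta (R : pzSemiRingType) (c : nat -> R) N l :
  (l < N)%N -> \sum_(j < N) c j * (j == l :> nat)%:R = c l.
Proof.
move=> lt_lN; rewrite (bigD1 (Ordinal lt_lN)) //= eqxx mulr1 big1 ?addr0 // => j.
by rewrite -val_eqE /= => /negbTE->; rewrite mulr0.
Qed.

Lemma closed_field_sqrt (k : closedFieldType) (a : k) : exists r : k, r ^+ 2 = a.
Proof.
have [r r2] := @solve_monicpoly k 2 (fun i => (i == 0)%:R * a) isT.
by exists r; rewrite r2 !big_ord_recl big_ord0 /= mul1r mulr1 !mul0r !addr0.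
Qed.

Section Orthonormal.
Variables (k : fieldType) (V : lmodType k) (B : V -> V -> k).
Hypothesis BL : qs_bilinear_form B.
Hypothesis two_neq0 : (2 : k) != 0.

Local Notation polar := (polar B).

Definition orthonormal_upto m (v : nat -> V) :=
  forall i j, (i < m)%N -> (j < m)%N -> polar (v i) (v j) = (i == j)%:R * 2.

Lemma polar_orthonormal_sum m v (t : nat -> k) j :
  orthonormal_upto m v -> (j < m)%N ->
  polar (\sum_(l < m) t l *: v l) (v j) = t j * 2.
Proof.
move=> v_on lt_jm.
rewrite polar_suml // -[RHS](sum_ord_delta (fun l => t l * 2) lt_jm).
by apply: eq_bigr => l _; rewrite v_on //; ring.
Qed.

Lemma form_orthonormal_sum m v (t : nat -> k) :
  orthonormal_upto m v ->
  B (\sum_(l < m) t l *: v l) (\sum_(l < m) t l *: v l) = \sum_(l < m) t l ^+ 2.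
Proof.
move=> v_on; apply: (mulIf two_neq0); rewrite -polar_diag polar_sumr // mulr_suml.
by apply: eq_bigr => l _; rewrite polar_orthonormal_sum //; ring.
Qed.

Lemma anisotropic_orthogonal (q : V -> k) m v :
  (forall u, q u = B u u) -> ~ qs_strength_le q m -> orthonormal_upto m v ->
  exists2 u, B u u != 0 & forall j, (j < m)%N -> polar u (v j) = 0.
Proof.
move=> qB q_strength v_on.
pose l (j : nat) w := polar w (v j) / 2.
pose P w := w - \sum_(j < m) l j w *: v j.
have P_orth w j : (j < m)%N -> polar (P w) (v j) = 0.
  move=> lt_jm; rewrite polarBl // (polar_orthonormal_sum (fun j => l j w)) //.
  by rewrite divfK ?subrr.
have [[w nz_Pw] | P_null] := classic (exists w, B (P w) (P w) != 0).
  by exists (P w) => // j /P_orth.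
case: q_strength; have lL j : qs_linear_form (l j).
  by move=> a u w; rewrite /l polar_linl // mulrDl mulrA.
exists (fun j : 'I_m => l j), (fun j : 'I_m => l j); split=> //; split=> // w.
have P_null_w : B (P w) (P w) = 0.
  by apply/eqP; apply: contraT => nz; case: P_null; exists w.
set s := \sum_(j < m) l j w *: v j.
have -> : q w = B (P w) (P w) + B s s + polar (P w) s.
  by rewrite -(form_addE BL) subrK qB.
have -> : polar (P w) s = 0.
  by rewrite polar_sumr // big1 // => j _; rewrite P_orth ?mulr0.
by rewrite P_null_w add0r addr0 (form_orthonormal_sum (fun j => l j w)).
Qed.

End Orthonormal.

Lemma orthonormal_seq (k : closedFieldType) (V : lmodType k) (B : V -> V -> k)
    (q : V -> k) :
  qs_bilinear_form B -> (2 : k) != 0 -> (forall u, q u = B u u) ->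
  qs_nondegenerate q ->
  exists v : nat -> V, forall i j, polar B (v i) (v j) = (i == j)%:R * 2.
Proof.
move=> BL two_neq0 qB q_nondeg.
pose P n (s : nat -> V) x := orthonormal_upto B n s ->
  B x x = 1 /\ forall j, (j < n)%N -> polar B x (s j) = 0.
have [v v_next] : exists v, forall n, P n v (v n).
  apply: (seq_choice 0) => [n s | n s s' x ss' Ps s'_on].
    have [s_on | s_off] := classic (orthonormal_upto B n s); last by exists 0.
    have [u Bu_nz u_orth] := anisotropic_orthogonal BL two_neq0 qB (q_nondeg n) s_on.
    have [r r2] := closed_field_sqrt (B u u).
    have r_nz : r != 0 by apply: contraNneq Bu_nz => r0; rewrite -r2 r0 expr0n.
    exists (r^-1 *: u) => _; split.
      by rewrite (form_scaleE BL) -r2 exprVn mulVf // expf_neq0.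
    by move=> j /u_orth u_orth_j; rewrite polarZl // u_orth_j mulr0.
  have s_on : orthonormal_upto B n s by move=> i j ? ?; rewrite !ss' // s'_on.
  by have [x1 x_orth] := Ps s_on; split=> // j lt_jn; rewrite -ss' // x_orth.
have v_on n : orthonormal_upto B n v.
  elim: n => [// | n IH] i j; rewrite !ltnS.
  have [vn1 vn_orth] := v_next n IH.
  rewrite leq_eqVlt => /orP[/eqP-> | lt_in]; rewrite leq_eqVlt => /orP[/eqP-> | lt_jn].
  - by rewrite eqxx polar_diag vn1.
  - by rewrite vn_orth // eq_sym (ltn_eqF lt_jn) mul0r.
  - by rewrite polarC vn_orth // (ltn_eqF lt_in) mul0r.
  - exact: IH.
by exists v => i j; apply: (v_on (maxn i j).+1); rewrite ltnS ?leq_maxl ?leq_maxr.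
Qed.

Definition hyperbolic_seq (k : fieldType) (V : lmodType k) (B : V -> V -> k)
    (f g : nat -> V) :=
  [/\ forall i j, polar B (f i) (f j) = 0, forall i j, polar B (g i) (g j) = 0
    & forall i j, polar B (f i) (g j) = (i == j)%:R].

Lemma hyperbolic_of_orthonormal (k : closedFieldType) (V : lmodType k)
    (B : V -> V -> k) (v : nat -> V) :
  qs_bilinear_form B -> (2 : k) != 0 ->
  (forall i j, polar B (v i) (v j) = (i == j)%:R * 2) ->
  exists f g, hyperbolic_seq B f g.
Proof.
move=> BL two_neq0 v_on.
pose pair (a b : k) i := a *: v i.*2 + b *: v i.*2.+1.
have polar_pair a b c d i j :
    polar B (pair a b i) (pair c d j) = (i == j)%:R * (a * c + b * d) * 2.
  rewrite !(polarDl BL, polarDr BL, polarZl BL, polarZr BL) !v_on.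
  have -> : (i.*2 == j.*2) = (i == j) by apply/eqP/eqP; lia.
  have -> : (i.*2.+1 == j.*2.+1) = (i == j) by apply/eqP/eqP; lia.
  have -> : (i.*2 == j.*2.+1) = false by apply/eqP; lia.
  have -> : (i.*2.+1 == j.*2) = false by apply/eqP; lia.
  by case: (i == j) => /=; ring.
have [iota iota2] := GRing.imaginary_exists k.
pose h : k := 2^-1.
have iota_h2 : iota * h * (iota * h) = - (h * h).
  by rewrite mulrACA -expr2 iota2 mulN1r.
exists (pair h (iota * h)), (pair h (- (iota * h))).
split=> i j; rewrite polar_pair ?mulrNN ?mulrN iota_h2 ?opprK ?subrr ?mulr0 ?mul0r //.
by rewrite /h; field.
Qed.

Definition sum_of_products (k : fieldType) (W : lmodType k) (q : W -> k)
    (x y : nat -> W -> k) (N : W -> nat) :=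
  [/\ forall j, qs_linear_form (x j), forall j, qs_linear_form (y j),
      forall w j, (N w <= j)%N -> x j w = 0 /\ y j w = 0
    & forall w, q w = \sum_(j < N w) x j w * y j w].

Section Hyperbolic.
Variables (k : fieldType) (V : lmodType k) (B : V -> V -> k) (f g : nat -> V).
Hypothesis BL : qs_bilinear_form B.
Hypothesis two_neq0 : (2 : k) != 0.
Hypothesis fg_hyp : hyperbolic_seq B f g.

Lemma polar_hyperbolic_sum_f N (x y : nat -> k) l : (l < N)%N ->
  polar B (\sum_(j < N) (x j *: f j + y j *: g j)) (f l) = y l.
Proof.
case: fg_hyp => ff _ fg lt_lN; rewrite big_split polarDl // !polar_suml //.
rewrite big1 ?add0r => [|j _]; last by rewrite ff mulr0.
by rewrite -(sum_ord_delta y lt_lN); apply: eq_bigr => j _; rewrite polarC fg eq_sym.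
Qed.

Lemma polar_hyperbolic_sum_g N (x y : nat -> k) l : (l < N)%N ->
  polar B (\sum_(j < N) (x j *: f j + y j *: g j)) (g l) = x l.
Proof.
case: fg_hyp => _ gg fg lt_lN; rewrite big_split polarDl // !polar_suml //.
rewrite [X in _ + X]big1 ?addr0 => [|j _]; last by rewrite gg mulr0.
by rewrite -(sum_ord_delta x lt_lN); apply: eq_bigr => j _; rewrite fg.
Qed.

Lemma form_hyperbolic_sum N (x y : nat -> k) :
  B (\sum_(j < N) (x j *: f j + y j *: g j)) (\sum_(j < N) (x j *: f j + y j *: g j))
  = \sum_(j < N) x j * y j.
Proof.
apply: (mulIf two_neq0); rewrite -polar_diag // {2}big_split polarDr // !polar_sumr //.
rewrite mulr_suml -big_split; apply: eq_bigr => j _.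
by rewrite polar_hyperbolic_sum_f ?polar_hyperbolic_sum_g //=; ring.
Qed.

Lemma embed_sum_of_products (W : lmodType k) (q' : W -> k) x y N :
  sum_of_products q' x y N ->
  exists phi : {linear W -> V}, forall w, B (phi w) (phi w) = q' w.
Proof.
case=> xL yL xy_supp q'E.
pose phi w := \sum_(j < N w) (x j w *: f j + y j w *: g j).
have phi_widen w M :
    (N w <= M)%N -> phi w = \sum_(j < M) (x j w *: f j + y j w *: g j).
  move=> le_NM; symmetry.
  apply: (sum_ord_widen (F := fun j => x j w *: f j + y j w *: g j) le_NM).
  by move=> j /xy_supp[-> ->]; rewrite !scale0r addr0.
have phiL a u w : phi (a *: u + w) = a *: phi u + phi w.
  rewrite !(phi_widen _ (maxn (N (a *: u + w)) (maxn (N u) (N w))));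
    rewrite ?leq_max ?leqnn ?orbT //.
  rewrite scaler_sumr -big_split; apply: eq_bigr => j _ /=.
  by rewrite xL yL !scalerDl !scalerDr !scalerA addrACA.
exists (linear_of phiL) => w /=.
by rewrite (@form_hyperbolic_sum (N w) (x^~ w) (y^~ w)) q'E.
Qed.

End Hyperbolic.

Definition coordinates (k : fieldType) (W : lmodType k) (e : nat -> W)
    (c : nat -> W -> k) (N : W -> nat) :=
  [/\ forall j, qs_linear_form (c j), forall w j, (N w <= j)%N -> c j w = 0
    & forall w, w = \sum_(j < N w) c j w *: e j].

Section FreshCoordinates.
Variables (k : fieldType) (W : lmodType k) (e : nat -> W).

(* The fresh [e_j] form a basis of the span of [e]; [fresh_coords a N w] says
   that [a] is the coordinate vector of [w] in that basis. *)
Definition fresh j := ~ exists d : 'I_j -> k, e j = \sum_(i < j) d i *: e i.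

Definition fresh_coords (a : nat -> k) N w :=
  [/\ forall j, (N <= j)%N -> a j = 0, forall j, ~ fresh j -> a j = 0
    & w = \sum_(j < N) a j *: e j].

Lemma sum_coords_widen (a : nat -> k) N M :
  (N <= M)%N -> (forall j, (N <= j)%N -> a j = 0) ->
  \sum_(j < M) a j *: e j = \sum_(j < N) a j *: e j.
Proof.
move=> le_NM a_supp.
apply: (sum_ord_widen (F := fun j => a j *: e j) le_NM) => j /a_supp->.
exact: scale0r.
Qed.

Lemma fresh_free N (a : nat -> k) :
  (forall j, ~ fresh j -> a j = 0) -> \sum_(j < N) a j *: e j = 0 ->
  forall j, (j < N)%N -> a j = 0.
Proof.
move=> a_fresh; elim: N => [// | N IH]; rewrite big_ord_recr /= => sum0.
have aN0 : a N = 0.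
  have [// | aN_nz] := eqVneq (a N) 0.
  rewrite a_fresh // => N_fresh; apply: N_fresh.
  exists (fun i => - (a N)^-1 * a i); apply: (scalerI aN_nz).
  have -> : a N *: e N = - \sum_(i < N) a i *: e i.
    by apply/eqP; rewrite -addr_eq0 addrC sum0.
  rewrite scaler_sumr -sumrN; apply: eq_bigr => i _.
  by rewrite scalerA mulrA mulrN mulfV // mulN1r scaleNr.
move: sum0; rewrite aN0 scale0r addr0 => /IH a0 j.
by rewrite ltnS leq_eqVlt => /orP[/eqP-> | /a0].
Qed.

Lemma fresh_coords_eq a N a' N' w :
  fresh_coords a N w -> fresh_coords a' N' w -> a =1 a'.
Proof.
move=> [a_supp a_fresh aE] [a'_supp a'_fresh a'E] j.
have diff0 : \sum_(i < maxn N N') (a i - a' i) *: e i = 0.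
  rewrite (eq_bigr (fun i : 'I_(maxn N N') => a i *: e i - a' i *: e i)); last first.
    by move=> i _; rewrite scalerBl.
  rewrite sumrB (sum_coords_widen (leq_maxl N N') a_supp).
  by rewrite (sum_coords_widen (leq_maxr N N') a'_supp) -aE -a'E subrr.
have diff_fresh i : ~ fresh i -> a i - a' i = 0.
  by move=> i_nf; rewrite a_fresh ?a'_fresh ?subrr.
have [lt_jM | le_Mj] := ltnP j (maxn N N').
  by apply/eqP; rewrite -subr_eq0; apply/eqP; apply: (fresh_free diff_fresh diff0).
by rewrite a_supp ?a'_supp // (leq_trans _ le_Mj) ?leq_maxl ?leq_maxr.
Qed.

Lemma fresh_coords_comb c a N u a' N' w :
  fresh_coords a N u -> fresh_coords a' N' w ->
  fresh_coords (fun j => c * a j + a' j) (maxn N N') (c *: u + w).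
Proof.
move=> [a_supp a_fresh aE] [a'_supp a'_fresh a'E]; split.
- by move=> j; rewrite geq_max => /andP[/a_supp-> /a'_supp->]; rewrite mulr0 addr0.
- by move=> j j_nf; rewrite a_fresh ?a'_fresh // mulr0 addr0.
rewrite aE a'E -(sum_coords_widen (leq_maxl N N') a_supp).
rewrite -(sum_coords_widen (leq_maxr N N') a'_supp) scaler_sumr -big_split.
by apply: eq_bigr => j _ /=; rewrite scalerDl scalerA.
Qed.

Lemma fresh_coords_sum (I : Type) (r : seq I) (P : pred I) (c : I -> k)
    (y : I -> W) :
  (forall i, exists a N, fresh_coords a N (y i)) ->
  exists a N, fresh_coords a N (\sum_(i <- r | P i) c i *: y i).
Proof.
move=> y_coords; elim/big_rec: _ => [|i w _ [a [N aw]]].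
  by exists (fun=> 0), 0%N; split=> //; rewrite big_ord0.
have [b [M bi]] := y_coords i.
by exists (fun j => c i * b j + a j), (maxn M N); apply: fresh_coords_comb.
Qed.

Lemma fresh_coords_e n : exists a N, fresh_coords a N (e n).
Proof.
elim/ltn_ind: n => n IH.
have [n_fresh | /NNPP[d ->]] := classic (fresh n); last first.
  by apply: fresh_coords_sum => i; apply: IH.
exists (fun j => (j == n)%:R), n.+1; split.
- by move=> j lt_nj; rewrite gtn_eqF.
- by move=> j j_nf; case: eqP => // j_n; rewrite j_n in j_nf.
rewrite big_ord_recr /= eqxx scale1r big1 ?add0r // => j _.
by rewrite ltn_eqF // scale0r.
Qed.

Lemma coordinates_of_span :
  (forall w, exists n (c : 'I_n -> k), w = \sum_(i < n) c i *: e i) ->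
  exists c N, coordinates e c N.
Proof.
move=> e_span.
have [rep repP] : exists rep : W -> (nat -> k) * nat,
    forall w, fresh_coords (rep w).1 (rep w).2 w.
  apply: (choice (fun w (r : (nat -> k) * nat) => fresh_coords r.1 r.2 w)) => w.
  have [n [c ->]] := e_span w.
  have [a [N aw]] : exists a N, fresh_coords a N (\sum_(i < n) c i *: e i).
    by apply: fresh_coords_sum => i; apply: fresh_coords_e.
  by exists (a, N).
exists (fun j w => (rep w).1 j), (fun w => (rep w).2); split.
- move=> j c u w.
  have repP_comb := fresh_coords_comb c (repP u) (repP w).
  exact: fresh_coords_eq (repP (c *: u + w)) repP_comb j.
- by move=> w j; case: (repP w) => + _ _; apply.
- by move=> w; case: (repP w).
Qed.

End FreshCoordinates.

Section Tails.
Variables (k : fieldType) (W : lmodType k) (B' : W -> W -> k) (e : nat -> W).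
Hypothesis BL' : qs_bilinear_form B'.

Definition tail (a : nat -> k) w j := w - \sum_(l < j) a l *: e l.

Lemma tailS a w j : tail a w j = a j *: e j + tail a w j.+1.
Proof. by rewrite /tail big_ord_recr /= [RHS]addrC opprD addrA subrK. Qed.

Lemma form_tail_telescope (a : nat -> k) (w : W) M :
  B' w w = \sum_(j < M) a j * (B' (e j) (tail a w j) + B' (tail a w j.+1) (e j))
           + B' (tail a w M) (tail a w M).
Proof.
elim: M => [|M ->]; first by rewrite big_ord0 add0r /tail big_ord0 subr0.
rewrite big_ord_recr /= -addrA; congr (_ + _); case: BL' => BL1 BL2.
rewrite {1}(tailS a w M) (linfD (BL1 (tail a w M))) (linfZ (BL1 (tail a w M))).
rewrite [X in B' (tail a w M.+1) X](tailS a w M).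
by rewrite (linfD (BL2 (tail a w M.+1))) (linfZ (BL2 (tail a w M.+1))); ring.
Qed.

End Tails.

Lemma sum_of_products_of_coordinates (k : fieldType) (W : lmodType k) (q' : W -> k)
    (e : nat -> W) c N :
  qs_quadratic q' -> coordinates e c N -> exists y, sum_of_products q' c y N.
Proof.
move=> [B' [B'L q'E]] [cL c_supp cE]; have [BL1 BL2] := B'L.
pose t w j := tail e (c^~ w) w j.
have tL j a u w : t (a *: u + w) j = a *: t u j + t w j.
  rewrite /t /tail.
  have -> : \sum_(l < j) c l (a *: u + w) *: e l =
            a *: \sum_(l < j) c l u *: e l + \sum_(l < j) c l w *: e l.
    rewrite scaler_sumr -big_split; apply: eq_bigr => l _ /=.
    by rewrite cL scalerDl scalerA.
  by rewrite scalerBr opprD addrACA.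
have t_end w j : (N w <= j)%N -> t w j = 0.
  move=> le_Nj; rewrite /t /tail {1}(cE w).
  rewrite (sum_ord_widen (F := fun l => c l w *: e l) le_Nj) ?subrr //.
  by move=> l /c_supp->; rewrite scale0r.
exists (fun j w => B' (e j) (t w j) + B' (t w j.+1) (e j)); split=> //.
- move=> j a u w; rewrite !tL (linfD (BL2 _)) (linfZ (BL2 _)).
  by rewrite (linfD (BL1 _)) (linfZ (BL1 _)); ring.
- move=> w j le_Nj; rewrite c_supp // !t_end ?(leqW le_Nj) //.
  by rewrite (linf0 (BL2 _)) (linf0 (BL1 _)) addr0.
- move=> w; rewrite q'E (form_tail_telescope e B'L (c^~ w) w (N w)) -/(t w (N w)).
  by rewrite t_end // (linf0 (BL1 _)) addr0.
Qed.

Theorem proposition2p4 (k : closedFieldType) (V W : lmodType k)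
    (q : V -> k) (q' : W -> k) :
  (2 \notin [pchar k])%N ->
  qs_quadratic q -> qs_nondegenerate q ->
  qs_quadratic q' -> qs_countable_dim W ->
  exists phi : {linear W -> V}, forall w : W, q (phi w) = q' w.
Proof.
move=> char_k [B [BL qB]] q_nondeg q'_quad [e e_span].
have two_neq0 : (2 : k) != 0 by rewrite (natf_neq0_pchar k 2) pnatE.
have [v v_on] := orthonormal_seq BL two_neq0 qB q_nondeg.
have [f [g fg_hyp]] := hyperbolic_of_orthonormal BL two_neq0 v_on.
have [c [N cN]] := coordinates_of_span e_span.
have [y xy] := sum_of_products_of_coordinates q'_quad cN.
have [phi phiE] := embed_sum_of_products BL two_neq0 fg_hyp xy.
by exists phi => w; rewrite qB phiE.
Qed.
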